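(* Let $n\ge1$, let $A_0,A_1\subseteq2^{<\omega}$, and let $C$ be $n$-fair for $A_0,A_1$. Let $(F,X)$ be a Mathias condition with $X$ $C$-computable. Let $m\ge1$, let $\varphi(G,U)$ be an $m$-by-$2^nm$ formula which is $\Sigma^0_1$ relative to $C$ and has an additional set parameter $G$, and let $M$ be an $m$-by-$2^nm$ disjoint matrix. Then there is a Mathias condition $(E,Y)$ extending $(F,X)$, with $Y$ $C$-computable, such that at least one of the following holds: (a) for every set $G$ satisfying $(E,Y)$, the formula $\varphi(G,U)$ is not essential in $M$; (b) $\varphi(E,V)$ holds for some $M$-valuation $V$ diagonalizing against $A_0,A_1$.
   Context: Mathias conditions. A Mathias condition is a pair $(F,X)$ with $F$ finite, $X$ infinite, and $\max F<\min X$. A condition $(E,Y)$ extends $(F,X)$ if $F\subseteq E$, $Y\subseteq X$, and $E\setminus F\subseteq X$. A set $G$ satisfies $(F,X)$ if $F\subseteq G$ and $G\setminus F\subseteq X$. Strings are finite binary strings, and $\preceq$ is the prefix relation. Two strings are incomparable if neither is a prefix of the other. Matrices. An $m$-by-$n$ matrix $M$ is an array of strings $\sigma_{i,j}$ ($i<m$, $j<n$), with rows $M(i)=(\sigma_{i,0},\dots,\sigma_{i,n-1})$. It is disjoint if each row consists of pairwise incomparable strings. Formulas. An $m$-by-$n$ formula is a formula with distinguished finite-set variables $U_{i,j}$. It is $\Sigma^{0,X}_1$ if it is $\Sigma^0_1$ relative to $X$. Valuations. An $M$-valuation is a tuple $V=(B_{i,j})$ of finite sets $B_{i,j}\subseteq\{\tau:\tau\succeq\sigma_{i,j}\}$.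 We write $\varphi(V)$ for $\varphi$ evaluated at $U_{i,j}:=B_{i,j}$, and $V(i)=(B_{i,0},\dots,B_{i,n-1})$. We write $V>s$ if all strings occurring in $V$ have length $>s$. Essential. $\varphi$ is essential in $M$ if for every $s$ there is an $M$-valuation $V>s$ with $\varphi(V)$. Diagonalization. An $M$-valuation $V$ diagonalizes against $A_0,A_1$ if for every $i<m$ there are components $L,R$ of $V(i)$ with $L\subseteq A_0$ and $R\subseteq A_1$. Fairness. For $n\ge1$, a set $X$ is $n$-fair for $A_0,A_1$ if the following holds: for every $m$, every $\Sigma^{0,X}_1$ $m$-by-$2^nm$ formula $\varphi$, and every $m$-by-$2^nm$ disjoint matrix $M$ in which $\varphi$ is essential, there is an $M$-valuation $V$ diagonalizing against $A_0,A_1$ with $\varphi(V)$. *)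

From mathcomp Require Import all_boot.
Set Implicit Arguments.
Unset Strict Implicit.
Unset Printing Implicit Defensive.

Inductive rcode :=
| RZero
| RSucc
| RProj of nat
| ROrc
| RComp of rcode & seq rcode
| RPrec of rcode & rcode
| RMu of rcode.

Inductive eval (O : nat -> bool) : rcode -> seq nat -> nat -> Prop :=
| evZero a : eval O RZero a 0
| evSucc a : eval O RSucc a (head 0 a).+1
| evProj i a : eval O (RProj i) a (nth 0 a i)
| evOrc a : eval O ROrc a (nat_of_bool (O (head 0 a)))
| evComp f gs a bs y : evals O gs a bs -> eval O f bs y -> eval O (RComp f gs) a y
| evPrec0 f g a y : eval O f a y -> eval O (RPrec f g) (0 :: a) y
| evPrecS f g n a z y : eval O (RPrec f g) (n :: a) z -> eval O g (n :: z :: a) y ->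
    eval O (RPrec f g) (n.+1 :: a) y
| evMu f a n : eval O f (n :: a) 0 ->
    (forall k, k < n -> exists v, eval O f (k :: a) v /\ v <> 0) ->
    eval O (RMu f) a n
with evals (O : nat -> bool) : seq rcode -> seq nat -> seq nat -> Prop :=
| evsNil a : evals O [::] a [::]
| evsCons g gs a b bs : eval O g a b -> evals O gs a bs -> evals O (g :: gs) a (b :: bs).

Definition computable_from (C X : nat -> bool) : Prop :=
  exists t, forall x, eval C t [:: x] (nat_of_bool (X x)).

Definition join (C G : nat -> bool) : nat -> bool :=
  fun x => if odd x then G x./2 else C x./2.

(* bijection 2^{<omega} -> nat *)
Fixpoint scode (s : seq bool) : nat :=
  match s with
  | [::] => 0
  | b :: s' => ((scode s').*2 + nat_of_bool b).+1
  end.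

(* finite sets of strings are represented by their canonical index D = sum 2^(scode tau) *)
Definition memS (tau : seq bool) (D : nat) : bool := odd (D %/ 2 ^ scode tau).

Definition subS (D : nat) (A : seq bool -> Prop) : Prop :=
  forall tau, memS tau D -> A tau.

Definition incomparable (s t : seq bool) : bool := ~~ prefix s t && ~~ prefix t s.

(* an m-by-k matrix: entry (i,j) for i < m, j < k *)
Definition matrix := nat -> nat -> seq bool.
(* a valuation: (i,j) |-> canonical index of the finite set B_{i,j} *)
Definition valuation := nat -> nat -> nat.

Definition disjoint_matrix (m k : nat) (M : matrix) : Prop :=
  forall i j j', i < m -> j < k -> j' < k -> j != j' -> incomparable (M i j) (M i j').

Definition is_valuation (m k : nat) (M : matrix) (V : valuation) : Prop :=
  forall i j tau, i < m -> j < k -> memS tau (V i j) -> prefix (M i j) tau.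

Definition val_gt (m k : nat) (V : valuation) (s : nat) : Prop :=
  forall i j tau, i < m -> j < k -> memS tau (V i j) -> s < size tau.

(* the input tuple (U_{i,j} := B_{i,j}) fed to a formula *)
Definition vargs (m k : nat) (V : valuation) : seq nat :=
  flatten [seq [seq V i j | j <- iota 0 k] | i <- iota 0 m].

Definition sigma1_in (O : nat -> bool) (m k : nat) (phi : valuation -> Prop) : Prop :=
  exists t, forall V, phi V <-> exists y, eval O t (vargs m k V) y.

Definition sigma1_param (C : nat -> bool) (m k : nat)
    (phi : (nat -> bool) -> valuation -> Prop) : Prop :=
  exists t, forall G V, phi G V <-> exists y, eval (join C G) t (vargs m k V) y.

Definition essential (m k : nat) (phi : valuation -> Prop) (M : matrix) : Prop :=
  forall s, exists V, [/\ is_valuation m k M V, val_gt m k V s & phi V].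

Definition diagonalizes (m k : nat) (V : valuation) (A0 A1 : seq bool -> Prop) : Prop :=
  forall i, i < m -> exists j1 j2, [/\ j1 < k, j2 < k, subS (V i j1) A0 & subS (V i j2) A1].

Definition fair (n : nat) (C : nat -> bool) (A0 A1 : seq bool -> Prop) : Prop :=
  forall (m : nat) (phi : valuation -> Prop) (M : matrix),
    sigma1_in C m (2 ^ n * m) phi ->
    disjoint_matrix m (2 ^ n * m) M ->
    essential m (2 ^ n * m) phi M ->
    exists V, [/\ is_valuation m (2 ^ n * m) M V, diagonalizes m (2 ^ n * m) V A0 A1 & phi V].

Definition finite_set (F : nat -> bool) : Prop := exists b, forall x, F x -> x < b.
Definition infinite_set (X : nat -> bool) : Prop := forall k, exists x, k <= x /\ X x.

Definition mathias (F X : nat -> bool) : Prop :=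
  [/\ finite_set F, infinite_set X & forall x y, F x -> X y -> x < y].

Definition mextends (E Y F X : nat -> bool) : Prop :=
  [/\ forall x, F x -> E x, forall x, Y x -> X x & forall x, E x -> ~~ F x -> X x].

Definition msatisfies (G F X : nat -> bool) : Prop :=
  (forall x, F x -> G x) /\ (forall x, G x -> ~~ F x -> X x).

From mathcomp Require Import all_boot zify.
From Stdlib Require Import Classical.
Set Implicit Arguments. Unset Strict Implicit. Unset Printing Implicit Defensive.

(* Write [approx F X e] for F ∪ (X ∩ D), where D is the finite set whose characteristic
   bits are those of [e]. The formula ψ(V) := ∃e, φ(approx F X e, V) is Σ⁰₁ relative to C:
   one C-program dovetails over [e] and a fuel bound, running a fuel-bounded evaluator of
   φ's program relative to the C-computable oracles C ⊕ approx F X e. If ψ is essential in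
   M, fairness gives a diagonalizing V with φ(approx F X e, V), and
   (approx F X e, X ∩ (B, ∞)) for B large is the required condition. Otherwise (F, X)
   itself works: by the use principle every G satisfying (F, X) has φ(G, V) ⇒ ψ(V), so
   φ(G, ·) is not essential in M either. *)

Definition bitn (y n : nat) : bool := odd (iter y half n).

Definition nat_of_bits (l : seq bool) : nat := foldr (fun (b : bool) acc => b + acc.*2) 0 l.

Lemma bitn_bits l y : bitn y (nat_of_bits l) = nth false l y.
Proof.
rewrite /bitn; elim: l y => [|b l IH] [|y] /=.
- by [].
- by rewrite iter_fix.
- by rewrite oddD odd_double addbF oddb.
- by rewrite -iterS iterSr half_bit_double IH.
Qed.

Lemma bitn_lt y n : bitn y n -> y < n.
Proof.
rewrite /bitn; elim: y n => [|y IH] n /=; first by case: n.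
rewrite -iterS iterSr => /IH H.
have := odd_double_half n; rewrite -muln2; lia.
Qed.

Lemma finite_set_bits F : finite_set F -> exists f, forall y, bitn y f = F y.
Proof.
move=> [b Hb]; exists (nat_of_bits (mkseq F b)) => y; rewrite bitn_bits.
case: (ltnP y b) => Hy; first by rewrite nth_mkseq.
rewrite nth_default ?size_mkseq //; case E: (F y) => //.
by have := Hb _ E; rewrite ltnNge Hy.
Qed.

Section Gadgets.
Variable O : nat -> bool.

Lemma evals1 g a u : eval O g a u -> evals O [:: g] a [:: u].
Proof. by move=> Hg; apply: evsCons => //; apply: evsNil. Qed.

Lemma evals2 g h a u v : eval O g a u -> eval O h a v -> evals O [:: g; h] a [:: u; v].
Proof. by move=> Hg Hh; do 2 (apply: evsCons => //); apply: evsNil. Qed.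

Lemma evals3 g h k a u v w : eval O g a u -> eval O h a v -> eval O k a w ->
  evals O [:: g; h; k] a [:: u; v; w].
Proof. by move=> Hg Hh Hk; do 3 (apply: evsCons => //); apply: evsNil. Qed.

Lemma eval_prec f g a (h : nat -> nat) :
  eval O f a (h 0) -> (forall k, eval O g (k :: h k :: a) (h k.+1)) ->
  forall n, eval O (RPrec f g) (n :: a) (h n).
Proof. by move=> H0 HS; elim=> [|n IH]; [apply: evPrec0|apply: evPrecS (HS n)]. Qed.

Definition csucc x := RComp RSucc [:: x].
Lemma eval_csucc x a u : eval O x a u -> eval O (csucc x) a u.+1.
Proof. by move=> H; apply: evComp (evals1 H) _; apply: (evSucc O [:: u]). Qed.

Definition cconst k := iter k csucc RZero.
Lemma eval_cconst k a : eval O (cconst k) a k.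
Proof. by elim: k => [|k IH] /=; [apply: evZero|apply: eval_csucc]. Qed.

Definition cpred x := RComp (RPrec RZero (RProj 0)) [:: x].
Lemma eval_cpred x a u : eval O x a u -> eval O (cpred x) a u.-1.
Proof.
move=> H; apply: evComp (evals1 H) _.
apply: (eval_prec (h := predn)) => [|k]; first exact: evZero.
exact: (evProj O 0 [:: k; _]).
Qed.

Definition cif0 x y z := RComp (RPrec (RProj 0) (RProj 3)) [:: x; y; z].
Lemma eval_cif0 x y z a u v w : eval O x a u -> eval O y a v -> eval O z a w ->
  eval O (cif0 x y z) a (if u == 0 then v else w).
Proof.
move=> Hx Hy Hz; apply: evComp (evals3 Hx Hy Hz) _.
apply: (eval_prec (h := fun u => if u == 0 then v else w)) => [|k].
  exact: (evProj O 0 [:: v; w]).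
exact: (evProj O 3 [:: k; _; v; w]).
Qed.

Definition cguard x y := cif0 x (cconst 0) y.
Lemma eval_cguard x y a u v : eval O x a u -> eval O y a v ->
  eval O (cguard x y) a (if u == 0 then 0 else v).
Proof. by move=> Hx Hy; apply: eval_cif0 => //; apply: eval_cconst. Qed.

Definition codd x := RComp (RPrec RZero (cif0 (RProj 1) (cconst 1) (cconst 0))) [:: x].
Lemma eval_codd x a u : eval O x a u -> eval O (codd x) a (odd u).
Proof.
move=> H; apply: evComp (evals1 H) _.
apply: (eval_prec (h := fun u => nat_of_bool (odd u))) => [|k]; first exact: evZero.
have := eval_cif0 (evProj O 1 [:: k; nat_of_bool (odd k)]) (eval_cconst 1 _) (eval_cconst 0 _).
by rewrite /=; case: (odd k).
Qed.

Definition cadd x y := RComp (RPrec (RProj 0) (csucc (RProj 1))) [:: x; y].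
Lemma eval_cadd x y a u v : eval O x a u -> eval O y a v -> eval O (cadd x y) a (u + v).
Proof.
move=> Hx Hy; apply: evComp (evals2 Hx Hy) _.
apply: (eval_prec (h := fun u => u + v)) => [|k]; first exact: (evProj O 0 [:: v]).
exact: eval_csucc (evProj O 1 [:: k; k + v; v]).
Qed.

Definition csub x y := RComp (RPrec (RProj 0) (cpred (RProj 1))) [:: y; x].
Lemma eval_csub x y a u v : eval O x a u -> eval O y a v -> eval O (csub x y) a (u - v).
Proof.
move=> Hx Hy; apply: evComp (evals2 Hy Hx) _.
apply: (eval_prec (h := fun v => u - v)) => [|k].
  by rewrite subn0; exact: (evProj O 0 [:: u]).
by rewrite subnS; exact: eval_cpred (evProj O 1 [:: k; _; u]).
Qed.

Definition chalf x := RComp (RPrec RZero (cadd (RProj 1) (codd (RProj 0)))) [:: x].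
Lemma eval_chalf x a u : eval O x a u -> eval O (chalf x) a u./2.
Proof.
move=> H; apply: evComp (evals1 H) _.
apply: (eval_prec (h := half)) => [|k]; first exact: evZero.
have := eval_cadd (evProj O 1 [:: k; k./2]) (eval_codd (evProj O 0 [:: k; k./2])).
by rewrite /= uphalf_half addnC.
Qed.

Definition cbit y n := codd (RComp (RPrec (RProj 0) (chalf (RProj 1))) [:: y; n]).
Lemma eval_cbit y n a u v : eval O y a u -> eval O n a v -> eval O (cbit y n) a (bitn u v).
Proof.
move=> Hy Hn; apply: eval_codd; apply: evComp (evals2 Hy Hn) _.
apply: (eval_prec (h := fun u => iter u half v)) => [|k]; first exact: (evProj O 0 [:: v]).
exact: eval_chalf (evProj O 1 [:: k; _; v]).
Qed.

Definition corc x := RComp ROrc [:: x].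
Lemma eval_corc x a u : eval O x a u -> eval O (corc x) a (O u).
Proof. by move=> H; apply: evComp (evals1 H) _; apply: (evOrc O [:: u]). Qed.

Definition cprojs (i n : nat) := map RProj (iota i n).
Lemma evals_cprojs p a : evals O (cprojs (size p) (size a)) (p ++ a) a.
Proof.
rewrite /cprojs; elim: a p => [|x a IH] p /=; first exact: evsNil.
apply: evsCons; first by have := evProj O (size p) (p ++ x :: a); rewrite nth_cat ltnn subnn.
by have := IH (rcons p x); rewrite size_rcons cat_rcons.
Qed.

End Gadgets.

Fixpoint all_codes (P : rcode -> Prop) (gs : seq rcode) : Prop :=
  if gs is g :: gs' then P g /\ all_codes P gs' else True.

Section NestedInduction.
Variable P : rcode -> Prop.
Hypotheses (HZ : P RZero) (HS : P RSucc) (HP : forall i, P (RProj i)) (HO : P ROrc)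
  (HC : forall f gs, P f -> all_codes P gs -> P (RComp f gs))
  (HR : forall f g, P f -> P g -> P (RPrec f g)) (HM : forall f, P f -> P (RMu f)).

Fixpoint rcode_nested_ind (t : rcode) : P t :=
  match t with
  | RZero => HZ | RSucc => HS | RProj i => HP i | ROrc => HO
  | RComp f gs => HC (rcode_nested_ind f)
      ((fix all_ind gs : all_codes P gs :=
          if gs is g :: gs' then conj (rcode_nested_ind g) (all_ind gs') else I) gs)
  | RPrec f g => HR (rcode_nested_ind f) (rcode_nested_ind g)
  | RMu f => HM (rcode_nested_ind f)
  end.

End NestedInduction.

Section Inversion.
Variable O : nat -> bool.

Lemma eval_zero_inv a y : eval O RZero a y -> y = 0.
Proof. by move=> H; inversion H. Qed.
Lemma eval_succ_inv a y : eval O RSucc a y -> y = (head 0 a).+1.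
Proof. by move=> H; inversion H. Qed.
Lemma eval_proj_inv i a y : eval O (RProj i) a y -> y = nth 0 a i.
Proof. by move=> H; inversion H. Qed.
Lemma eval_orc_inv a y : eval O ROrc a y -> y = O (head 0 a).
Proof. by move=> H; inversion H. Qed.
Lemma eval_comp_inv f gs a y :
  eval O (RComp f gs) a y -> exists bs, evals O gs a bs /\ eval O f bs y.
Proof. by move=> H; inversion H; subst; eauto. Qed.
Lemma eval_prec_nil f g y : ~ eval O (RPrec f g) [::] y.
Proof. by move=> H; inversion H. Qed.
Lemma eval_prec0_inv f g a y : eval O (RPrec f g) (0 :: a) y -> eval O f a y.
Proof. by move=> H; inversion H. Qed.
Lemma eval_precS_inv f g n a y : eval O (RPrec f g) (n.+1 :: a) y ->
  exists z, eval O (RPrec f g) (n :: a) z /\ eval O g (n :: z :: a) y.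
Proof. by move=> H; inversion H; subst; eauto. Qed.
Lemma eval_mu_inv f a n : eval O (RMu f) a n ->
  eval O f (n :: a) 0 /\ (forall k, k < n -> exists v, eval O f (k :: a) v /\ v <> 0).
Proof. by move=> H; inversion H; subst; split. Qed.
Lemma evals_nil_inv a bs : evals O [::] a bs -> bs = [::].
Proof. by move=> H; inversion H. Qed.
Lemma evals_cons_inv g gs a bs : evals O (g :: gs) a bs ->
  exists b bs', [/\ bs = b :: bs', eval O g a b & evals O gs a bs'].
Proof. by move=> H; inversion H; subst; do 2 eexists; split; eauto. Qed.

Lemma evals_size gs a bs : evals O gs a bs -> size bs = size gs.
Proof.
elim: gs bs => [|g gs IH] bs; first by move/evals_nil_inv->.
by case/evals_cons_inv=> [b [bs' [-> _ H]]] /=; rewrite (IH _ H).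
Qed.

End Inversion.

Lemma eval_functional O t a y y' : eval O t a y -> eval O t a y' -> y = y'.
Proof.
elim/rcode_nested_ind: t a y y'.
- by move=> a y y' /eval_zero_inv-> /eval_zero_inv->.
- by move=> a y y' /eval_succ_inv-> /eval_succ_inv->.
- by move=> i a y y' /eval_proj_inv-> /eval_proj_inv->.
- by move=> a y y' /eval_orc_inv-> /eval_orc_inv->.
- move=> f gs IHf IHgs a y y' /eval_comp_inv[bs [E1 H1]] /eval_comp_inv[bs' [E2 H2]].
  suff E : bs = bs' by subst; exact: IHf H1 H2.
  elim: gs bs bs' IHgs E1 E2 {H1 H2} => [|g gs IH] bs bs' /= IHgs E1 E2.
    by rewrite (evals_nil_inv E1) (evals_nil_inv E2).
  case/evals_cons_inv: E1 => [b [bs1 [-> Hb Hbs]]].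
  case/evals_cons_inv: E2 => [b' [bs1' [-> Hb' Hbs']]].
  by rewrite (proj1 IHgs _ _ _ Hb Hb') (IH _ _ (proj2 IHgs) Hbs Hbs').
- move=> f g IHf IHg [|n a] y y' H1; first by case: (eval_prec_nil H1).
  elim: n y y' H1 => [|n IH] y y' H1 H2.
    exact: IHf (eval_prec0_inv H1) (eval_prec0_inv H2).
  case/eval_precS_inv: H1 => [z [Hz Hy]]; case/eval_precS_inv: H2 => [z' [Hz' Hy']].
  by have Ez := IH _ _ Hz Hz'; subst; exact: IHg Hy Hy'.
- move=> f IHf a y y' /eval_mu_inv[H0 H1] /eval_mu_inv[H0' H1'].
  case: (ltngtP y y') => // Hlt.
  + have [v [Hv Hv0]] := H1' _ Hlt; by rewrite -(IHf _ _ _ H0 Hv) in Hv0.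
  + have [v [Hv Hv0]] := H1 _ Hlt; by rewrite -(IHf _ _ _ H0' Hv) in Hv0.
Qed.

(* Fuel values: [0] means "no result (yet)", [y.+1] means "result [y]". *)
Definition all_pos (rs : seq nat) : nat :=
  foldr (fun r acc => if r == 0 then 0 else acc) 1 rs.

Fixpoint prec_fuel (z0 : nat) (step : nat -> nat -> nat) (n : nat) : nat :=
  if n is k.+1 then let z := prec_fuel z0 step k in if z == 0 then 0 else step k z else z0.

(* Scans the fuel values [R 0], ..., [R n.-1]: the state is [1] while all of them
   encode nonzero outputs, [k.+2] once [R k] encodes the output [0], and [0] if some
   [R k] has no result. *)
Fixpoint mu_fuel (R : nat -> nat) (n : nat) : nat :=
  if n is k.+1 then
    let acc := mu_fuel R k in
    if acc.-1 == 0 then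
      (if acc == 0 then 0 else
       let r := R k in if r == 0 then 0 else if r.-1 == 0 then k.+2 else 1)
    else acc
  else 1.

(* [fuel_eval O t len s a] evaluates [t] on [a] with every unbounded search cut off
   at [s]; [len] is the arity [size a], which the compiler below needs. *)
Fixpoint fuel_eval (O : nat -> bool) (t : rcode) (len s : nat) (a : seq nat) {struct t} :=
  match t with
  | RZero => 1
  | RSucc => (head 0 a).+2
  | RProj i => (nth 0 a i).+1
  | ROrc => (O (head 0 a)).+1
  | RComp f gs =>
      let rs := map (fun g => fuel_eval O g len s a) gs in
      if all_pos rs == 0 then 0 else fuel_eval O f (size gs) s (map predn rs)
  | RPrec f g =>
      if len is l.+1 then
        prec_fuel (fuel_eval O f l s (behead a))
          (fun k z => fuel_eval O g l.+2 s (k :: z.-1 :: behead a)) (head 0 a)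
      else 0
  | RMu f => (mu_fuel (fun k => fuel_eval O f len.+1 s (k :: a)) s).-1
  end.

Lemma all_pos_neq0 rs : (all_pos rs != 0) = all (fun r => r != 0) rs.
Proof. by elim: rs => //= r rs <-; case: (r == 0). Qed.

Lemma mu_fuel_searching R n : mu_fuel R n = 1 -> forall i, i < n -> 1 < R i.
Proof.
elim: n => // j IH /=.
case: (mu_fuel R j) IH => [|[|acc]] IH //=.
case E: (R j) => [|[|r]] //= _ i.
by rewrite ltnS leq_eqVlt => /orP[/eqP->|/(IH erefl)]; rewrite ?E.
Qed.

Lemma mu_fuel_found R n k : mu_fuel R n = k.+2 -> R k = 1 /\ forall j, j < k -> 1 < R j.
Proof.
elim: n => // j IH /=.
case E0: (mu_fuel R j) IH => [|[|acc]] IH //=.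
case E: (R j) => [|[|r]] //= [<-]; split => //; exact: mu_fuel_searching E0.
Qed.

Lemma mu_fuel_reach R n : (forall k, k < n -> 1 < R k) -> R n = 1 ->
  forall s, n < s -> mu_fuel R s = n.+2.
Proof.
move=> Hlt Hn.
have H1 j : j <= n -> mu_fuel R j = 1.
  elim: j => // j IH Hj /=; rewrite IH ?(ltnW Hj) //=.
  by have := Hlt _ Hj; case: (R j) => [|[|r]].
elim=> // s IH; rewrite ltnS leq_eqVlt => /orP[/eqP<-|Hs] /=.
  by rewrite H1 //= Hn.
by rewrite IH.
Qed.

Lemma fuel_eval_sound O t len s a y :
  size a = len -> fuel_eval O t len s a = y.+1 -> eval O t a y.
Proof.
elim/rcode_nested_ind: t len s a y.
- by move=> len s a y _ /= [<-]; apply: evZero.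
- by move=> len s a y _ /= [<-]; apply: evSucc.
- by move=> i len s a y _ /= [<-]; apply: evProj.
- by move=> len s a y _ /= [<-]; apply: evOrc.
- move=> f gs IHf IHgs len s a y Hs /=.
  case: ifP => // /negbT Hp Hf.
  apply: evComp (IHf _ _ _ _ _ Hf); last by rewrite !size_map.
  move: Hp; rewrite all_pos_neq0.
  elim: gs IHgs {Hf} => [|g gs IH] /= IHgs Hp; first exact: evsNil.
  case/andP: Hp => Hg Hp; apply: evsCons; last exact: IH (proj2 IHgs) Hp.
  by apply: (proj1 IHgs len s a _ Hs); rewrite prednK // lt0n.
- move=> f g IHf IHg [|l] s a y //= Hs; case: a Hs => [|n a] //= [Hs].
  elim: n y => [|n IH] y /=; first by move=> H; apply: evPrec0; exact: IHf H.
  case E: (prec_fuel _ _ n) => [|z] //= H.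
  by apply: evPrecS (IH _ E) _; apply: IHg H; rewrite /= Hs.
- move=> f IHf len s a y Hs /= H.
  have H2 : mu_fuel (fun k => fuel_eval O f len.+1 s (k :: a)) s = y.+2.
    by move: H; case: (mu_fuel _ _) => [|[|]] //= ? ->.
  case: (mu_fuel_found H2) => /= Hy Hj.
  apply: evMu; first by apply: IHf Hy; rewrite /= Hs.
  move=> k Hk; have := Hj _ Hk.
  case E: (fuel_eval O f len.+1 s (k :: a)) => [|[|v]] // _.
  by exists v.+1; split => //; apply: IHf E; rewrite /= Hs.
Qed.

Lemma eventually_forall_lt (P : nat -> nat -> Prop) n :
  (forall k, k < n -> exists s0, forall s, s0 <= s -> P k s) ->
  exists s0, forall s, s0 <= s -> forall k, k < n -> P k s.
Proof.
elim: n => [|n IH] H; first by exists 0.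
have [s1 H1] := IH (fun k Hk => H k (ltnW Hk)).
have [s2 H2] := H n (ltnSn n).
exists (maxn s1 s2) => s Hs k; rewrite ltnS leq_eqVlt => /orP[/eqP->|Hk].
  by apply: H2; apply: leq_trans Hs; apply: leq_maxr.
by apply: H1 => //; apply: leq_trans Hs; apply: leq_maxl.
Qed.

Lemma fuel_eval_complete O t a y len : eval O t a y -> size a = len ->
  exists s0, forall s, s0 <= s -> fuel_eval O t len s a = y.+1.
Proof.
elim/rcode_nested_ind: t a y len.
- by move=> a y len /eval_zero_inv-> _; exists 0.
- by move=> a y len /eval_succ_inv-> _; exists 0.
- by move=> i a y len /eval_proj_inv-> _; exists 0.
- by move=> a y len /eval_orc_inv-> _; exists 0.
- move=> f gs IHf IHgs a y len /eval_comp_inv[bs [Hbs Hf]] Hs.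
  have [s1 H1] : exists s0, forall s, s0 <= s ->
      map (fun g => fuel_eval O g len s a) gs = map succn bs.
    elim: gs bs IHgs Hbs {Hf} => [|g gs IH] bs IHgs Hbs.
      by rewrite (evals_nil_inv Hbs); exists 0.
    case/evals_cons_inv: Hbs => [b [bs' [-> Hb Hbs']]].
    have [s2 H2] := IH _ (proj2 IHgs) Hbs'.
    have [s3 H3] := proj1 IHgs _ _ _ Hb Hs.
    exists (maxn s2 s3) => s Hsm /=; rewrite H2 ?H3 //; apply: leq_trans Hsm.
      exact: leq_maxr.
    exact: leq_maxl.
  have [s2 H2] := IHf _ _ _ Hf (erefl (size bs)).
  exists (maxn s1 s2) => s Hsm /=; rewrite H1; last by apply: leq_trans Hsm; apply: leq_maxl.
  have -> : (all_pos (map succn bs) == 0) = false.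
    by rewrite -[_ == 0]negbK all_pos_neq0 all_map; apply/allP.
  rewrite -map_comp map_id_in // -(evals_size Hbs); apply: H2.
  by apply: leq_trans Hsm; apply: leq_maxr.
- move=> f g IHf IHg [|n a] y len H; first by case: (eval_prec_nil H).
  case: len => [|l] //= [Hs].
  elim: n y H => [|n IH] y H /=; first exact: IHf (eval_prec0_inv H) Hs.
  case/eval_precS_inv: H => [z [Hz Hy]].
  have [s1 H1] := IH _ Hz.
  have [s2 H2] := IHg _ _ _ Hy (erefl (size (n :: z :: a))).
  exists (maxn s1 s2) => s Hsm; rewrite H1 /=; last by apply: leq_trans Hsm; apply: leq_maxl.
  by rewrite -Hs H2 //; apply: leq_trans Hsm; apply: leq_maxr.
- move=> f IHf a y len /eval_mu_inv[H0 H1] Hs.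
  have [s1 Hs1] : exists s0, forall s, s0 <= s ->
      forall k, k < y -> 1 < fuel_eval O f len.+1 s (k :: a).
    apply: eventually_forall_lt => k Hk; have [v [Hv Hv0]] := H1 k Hk.
    have [s0 H] := IHf _ _ _ Hv (f_equal succn Hs).
    by exists s0 => s Hs0; rewrite H //; case: v Hv Hv0 {H}.
  have [s2 Hs2] := IHf _ _ _ H0 (f_equal succn Hs).
  exists (maxn (maxn s1 s2) y.+1) => s Hsm /=.
  have [Hs1s Hs2s] : s1 <= s /\ s2 <= s.
    by split; apply: leq_trans Hsm; apply: leq_trans (leq_maxl _ _);
      [exact: leq_maxl|exact: leq_maxr].
  rewrite (@mu_fuel_reach _ y) //; [exact: Hs1| exact: Hs2|].
  by apply: leq_trans Hsm; apply: leq_maxr.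
Qed.

Definition agree (O O' : nat -> bool) (b : nat) := forall x, x < b -> O' x = O x.

Lemma agree_maxl O O' b b' : agree O O' (maxn b b') -> agree O O' b.
Proof. by move=> H x Hx; apply: H; apply: leq_trans (leq_maxl _ _). Qed.
Lemma agree_maxr O O' b b' : agree O O' (maxn b b') -> agree O O' b'.
Proof. by move=> H x Hx; apply: H; apply: leq_trans (leq_maxr _ _). Qed.

Lemma fuel_eval_use O t len s a : exists b, forall O', agree O O' b ->
  fuel_eval O' t len s a = fuel_eval O t len s a.
Proof.
elim/rcode_nested_ind: t len s a.
- by move=> len s a; exists 0.
- by move=> len s a; exists 0.
- by move=> i len s a; exists 0.
- by move=> len s a; exists (head 0 a).+1 => O' H /=; rewrite H.
- move=> f gs IHf IHgs len s a.
  have [b1 H1] : exists b, forall O', agree O O' b ->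
      map (fun g => fuel_eval O' g len s a) gs = map (fun g => fuel_eval O g len s a) gs.
    elim: gs IHgs => [|g gs IH] IHgs; first by exists 0.
    have [b2 H2] := IH (proj2 IHgs); have [b3 H3] := proj1 IHgs len s a.
    exists (maxn b2 b3) => O' HO /=.
    by rewrite H2 ?H3 //; [exact: agree_maxr HO|exact: agree_maxl HO].
  have [b2 H2] := IHf (size gs) s (map predn (map (fun g => fuel_eval O g len s a) gs)).
  exists (maxn b1 b2) => O' HO /=.
  by rewrite H1 ?H2 //; [exact: agree_maxr HO|exact: agree_maxl HO].
- move=> f g IHf IHg [|l] s a; first by exists 0.
  rewrite /=; elim: (head 0 a) => [|n [b1 H1]] /=; first exact: IHf.
  set z := prec_fuel _ _ n.
  have [b2 H2] := IHg l.+2 s (n :: z.-1 :: behead a).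
  exists (maxn b1 b2) => O' HO.
  by rewrite H1 ?H2 //; [exact: agree_maxr HO|exact: agree_maxl HO].
- move=> f IHf len s a.
  suff H n : exists b, forall O', agree O O' b ->
      mu_fuel (fun k => fuel_eval O' f len.+1 s (k :: a)) n =
      mu_fuel (fun k => fuel_eval O f len.+1 s (k :: a)) n.
    by have [b Hb] := H s; exists b => O' HO /=; rewrite Hb.
  elim: n => [|n [b1 H1]] /=; first by exists 0.
  have [b2 H2] := IHf len.+1 s (n :: a).
  exists (maxn b1 b2) => O' HO.
  by rewrite H1 ?H2 //; [exact: agree_maxr HO|exact: agree_maxl HO].
Qed.

Lemma eval_use O t a y : eval O t a y ->
  exists b, forall O', agree O O' b -> eval O' t a y.
Proof.
move=> H; have [s Hs] := fuel_eval_complete H (erefl (size a)).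
have [b Hb] := fuel_eval_use O t (size a) s a.
by exists b => O' HO; apply: (@fuel_eval_sound _ _ _ s _ _ (erefl _)); rewrite Hb // Hs.
Qed.

(* [compile orc t len] runs on [s :: e :: a] and returns [fuel_eval (Os e) t len s a],
   the oracle [Os e] being computed by [orc] (see [eval_compile]). *)
Fixpoint compile (orc : rcode) (t : rcode) (len : nat) {struct t} : rcode :=
  match t with
  | RZero => cconst 1
  | RSucc => csucc (csucc (RProj 2))
  | RProj i => csucc (RProj i.+2)
  | ROrc => csucc orc
  | RComp f gs =>
      cguard (foldr cguard (cconst 1) (map (fun g => compile orc g len) gs))
        (RComp (compile orc f (size gs))
           (RProj 0 :: RProj 1 :: map (fun g => cpred (compile orc g len)) gs))
  | RPrec f g =>
      if len is l.+1 then
        RComp (RPrec (compile orc f l)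
                 (cguard (RProj 1) (RComp (compile orc g l.+2)
                    (RProj 2 :: RProj 3 :: RProj 0 :: cpred (RProj 1) :: cprojs 4 l))))
          (RProj 2 :: RProj 0 :: RProj 1 :: cprojs 3 l)
      else cconst 0
  | RMu f =>
      let body := RComp (compile orc f len.+1) (RProj 2 :: RProj 3 :: RProj 0 :: cprojs 4 len) in
      cpred (RComp (RPrec (cconst 1)
        (cif0 (cpred (RProj 1))
           (cif0 (RProj 1) (cconst 0)
              (cif0 body (cconst 0) (cif0 (cpred body) (csucc (csucc (RProj 0))) (cconst 1))))
           (RProj 1)))
        (RProj 0 :: RProj 0 :: RProj 1 :: cprojs 2 len))
  end.

Section Compile.
Variables (C : nat -> bool) (orc : rcode) (Os : nat -> nat -> bool).
Hypothesis eval_orc : forall s e a, eval C orc (s :: e :: a) (Os e (head 0 a)).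

Lemma eval_compile t len s e a : size a = len ->
  eval C (compile orc t len) (s :: e :: a) (fuel_eval (Os e) t len s a).
Proof.
elim/rcode_nested_ind: t len s e a.
- by move=> len s e a _; apply: eval_cconst.
- by move=> len s e a _; do 2 apply: eval_csucc; apply: (evProj C 2 [:: s, e & a]).
- by move=> i len s e a _; apply: eval_csucc; apply: (evProj C i.+2 [:: s, e & a]).
- by move=> len s e a _; apply: eval_csucc; apply: eval_orc.
- move=> f gs IHf IHgs len s e a Hs /=.
  set rs := map (fun g => fuel_eval (Os e) g len s a) gs.
  have [Hall Hargs] :
      eval C (foldr cguard (cconst 1) (map (fun g => compile orc g len) gs)) (s :: e :: a)
        (all_pos rs) /\
      evals C (map (fun g => cpred (compile orc g len)) gs) (s :: e :: a) (map predn rs).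
    rewrite {}/rs; elim: gs IHgs {IHf} => [|g gs IH] /= IHgs.
      by split; [exact: (eval_cconst C 1 _)|apply: evsNil].
    have [H1 H2] := IH (proj2 IHgs); have Hg := proj1 IHgs len s e a Hs.
    by split; [exact: eval_cguard Hg H1|apply: evsCons => //; apply: eval_cpred].
  apply: eval_cguard Hall _; apply: evComp (IHf _ s e _ _); last by rewrite !size_map.
  by apply: evsCons; [apply: (evProj C 0)|apply: evsCons; [apply: (evProj C 1)|exact: Hargs]].
- move=> f g IHf IHg [|l] s e a Hs /=; first exact: (eval_cconst C 0 _).
  case: a Hs => [|n a] //= [Hs].
  apply: evComp; last first.
    apply: eval_prec => [|k]; first exact: IHf.
    apply: eval_cguard; first exact: (evProj C 1 [:: k, _, s, e & a]).
    apply: evComp; last by apply: IHg; rewrite /= Hs.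
    apply: evsCons; first exact: (evProj C 2 [:: k, _, s, e & a]).
    apply: evsCons; first exact: (evProj C 3 [:: k, _, s, e & a]).
    apply: evsCons; first exact: (evProj C 0 [:: k, _, s, e & a]).
    apply: evsCons; first exact: eval_cpred (evProj C 1 [:: k, _, s, e & a]).
    by rewrite -Hs; exact: (evals_cprojs C [:: k; _; s; e] a).
  apply: evsCons; first exact: (evProj C 2 [:: s, e, n & a]).
  apply: evsCons; first exact: (evProj C 0 [:: s, e, n & a]).
  apply: evsCons; first exact: (evProj C 1 [:: s, e, n & a]).
  by rewrite -Hs; exact: (evals_cprojs C [:: s; e; n] a).
- move=> f IHf len s e a Hs /=.
  apply: eval_cpred; apply: evComp; last first.
    apply: eval_prec => [|k]; first exact: (eval_cconst C 1 _).
    set R := fun k => fuel_eval (Os e) f len.+1 s (k :: a).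
    have Hbody : eval C (RComp (compile orc f len.+1)
                          (RProj 2 :: RProj 3 :: RProj 0 :: cprojs 4 len))
        [:: k, mu_fuel R k, s, e & a] (R k).
      apply: evComp; last by apply: IHf; rewrite /= Hs.
      apply: evsCons; first exact: (evProj C 2 [:: k, _, s, e & a]).
      apply: evsCons; first exact: (evProj C 3 [:: k, _, s, e & a]).
      apply: evsCons; first exact: (evProj C 0 [:: k, _, s, e & a]).
      by rewrite -Hs; exact: (evals_cprojs C [:: k; _; s; e] a).
    have Hacc := evProj C 1 [:: k, mu_fuel R k, s, e & a].
    apply: (eval_cif0 (eval_cpred Hacc) _ Hacc).
    apply: (eval_cif0 Hacc (eval_cconst C 0 _)).
    apply: (eval_cif0 Hbody (eval_cconst C 0 _)).
    apply: (eval_cif0 (eval_cpred Hbody) _ (eval_cconst C 1 _)).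
    exact: eval_csucc (eval_csucc (evProj C 0 [:: k, _, s, e & a])).
  apply: evsCons; first exact: (evProj C 0 [:: s, e & a]).
  apply: evsCons; first exact: (evProj C 0 [:: s, e & a]).
  apply: evsCons; first exact: (evProj C 1 [:: s, e & a]).
  by rewrite -Hs; exact: (evals_cprojs C [:: s; e] a).
Qed.

End Compile.

Definition approx (F X : nat -> bool) (e y : nat) : bool := F y || X y && bitn y e.

Section Search.
Variables (C F X : nat -> bool) (tX : rcode) (f : nat) (t : rcode) (L : nat).
Hypothesis HX : forall x, eval C tX [:: x] (X x).
Hypothesis Hf : forall y, bitn y f = F y.

Definition corc_approx :=
  let y := chalf (RProj 2) in
  cif0 (codd (RProj 2)) (corc y)
    (cif0 (cbit y (cconst f)) (cguard (RComp tX [:: y]) (cbit y (RProj 1))) (cconst 1)).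

Lemma eval_corc_approx s e a :
  eval C corc_approx (s :: e :: a) (join C (approx F X e) (head 0 a)).
Proof.
have Hx : eval C (RProj 2) (s :: e :: a) (head 0 a).
  by have := evProj C 2 [:: s, e & a]; case: a.
have Hy := eval_chalf Hx.
have := eval_cif0 (eval_codd Hx) (eval_corc Hy)
  (eval_cif0 (eval_cbit Hy (eval_cconst C f _))
     (eval_cguard (evComp (evals1 Hy) (HX _)) (eval_cbit Hy (evProj C 1 [:: s, e & a])))
     (eval_cconst C 1 _)).
rewrite /join /approx Hf /=.
by case: (odd _); case: (F _); case: (X _); case: (bitn _ _).
Qed.

Fixpoint first_hit (p : nat) (a : seq nat) (n : nat) : nat :=
  if n is k.+1 then
    if first_hit p a k == 0 then fuel_eval (join C (approx F X k)) t L p a else first_hit p a k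
  else 0.

Lemma first_hitP p a n :
  first_hit p a n != 0 <-> exists2 e, e < n & fuel_eval (join C (approx F X e)) t L p a != 0.
Proof.
elim: n => [|n IH] /=; first by split => // [[e]].
case: ifP => [/eqP H0|/negbT H0]; split.
- by move=> H; exists n.
- case=> e; rewrite ltnS leq_eqVlt => /orP[/eqP->//|He] Hc.
  by have := proj2 IH (ex_intro2 _ _ e He Hc); rewrite H0.
- by move=> _; have [e He Hc] := proj1 IH H0; exists e => //; apply: ltnW.
- by [].
Qed.

(* [csearch] is the search μp. ∃e < p, [t] converges on [a] within fuel [p] relative to
   [join C (approx F X e)]. *)
Definition ctest :=
  let step := cif0 (RProj 1)
    (RComp (compile corc_approx t L) (RProj 2 :: RProj 0 :: cprojs 3 L)) (RProj 1) in
  cif0 (RComp (RPrec (cconst 0) step) (RProj 0 :: RProj 0 :: cprojs 1 L)) (cconst 1) (cconst 0).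

Definition csearch := RMu ctest.

Lemma eval_ctest p a : size a = L ->
  eval C ctest (p :: a) (if first_hit p a p == 0 then 1 else 0).
Proof.
move=> Hs; apply: eval_cif0; last exact: eval_cconst; last exact: eval_cconst.
apply: evComp; last first.
  apply: (eval_prec (h := first_hit p a)) => [|k]; first exact: (eval_cconst C 0 _).
  apply: eval_cif0; first exact: (evProj C 1 [:: k, _, p & a]).
    apply: evComp; last first.
      by apply: (eval_compile (Os := fun e => join C (approx F X e)) eval_corc_approx).
    apply: evsCons; first exact: (evProj C 2 [:: k, _, p & a]).
    apply: evsCons; first exact: (evProj C 0 [:: k, _, p & a]).
    by rewrite -Hs; exact: (evals_cprojs C [:: k; _; p] a).
  exact: (evProj C 1 [:: k, _, p & a]).
apply: evsCons; first exact: (evProj C 0 [:: p & a]).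
apply: evsCons; first exact: (evProj C 0 [:: p & a]).
by rewrite -Hs; exact: (evals_cprojs C [:: p] a).
Qed.

Lemma csearchP a : size a = L ->
  (exists y, eval C csearch a y) <-> exists e z, eval (join C (approx F X e)) t a z.
Proof.
move=> Hs; split.
  case=> p /eval_mu_inv[H0 _].
  have := eval_functional H0 (eval_ctest p Hs); case: ifP => // /negbT Hhit _.
  have [e _] := proj1 (first_hitP p a p) Hhit.
  case E: (fuel_eval _ t L p a) => [|z] // _.
  by exists e, z; apply: fuel_eval_sound E.
case=> e [z Hz]; have [s0 Hs0] := fuel_eval_complete Hz Hs.
have Hhit p : maxn s0 e.+1 <= p -> first_hit p a p != 0.
  move=> Hp; apply/first_hitP; exists e; first exact: leq_trans (leq_maxr _ _) Hp.
  by rewrite Hs0 //; apply: leq_trans (leq_maxl _ _) Hp.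
have Hex : exists p, (if first_hit p a p == 0 then 1 else 0) == 0.
  by exists (maxn s0 e.+1); rewrite ifN // Hhit.
exists (ex_minn Hex); case: ex_minnP => p Hp Hmin.
apply: evMu; first by rewrite -(eqP Hp); exact: eval_ctest.
move=> k Hk; exists (if first_hit k a k == 0 then 1 else 0); split; first exact: eval_ctest.
by move=> /eqP Hk0; have := Hmin _ Hk0; rewrite leqNgt Hk.
Qed.

End Search.

Lemma size_vargs m k V : size (vargs m k V) = m * k.
Proof.
suff H l : size (flatten [seq [seq V i j | j <- iota 0 k] | i <- l]) = size l * k.
  by rewrite /vargs H size_iota.
by elim: l => //= i l IH; rewrite size_cat size_map size_iota IH mulSn.
Qed.

Lemma approx_sigma1 C F X m k phi :
  computable_from C X -> finite_set F -> sigma1_param C m k phi ->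
  sigma1_in C m k (fun V => exists e, phi (approx F X e) V).
Proof.
move=> [tX HX] /finite_set_bits[f Hf] [t Ht].
exists (csearch tX f t (m * k)) => V; rewrite csearchP ?size_vargs //.
by split=> [[e /Ht [z Hz]]|[e [z Hz]]]; exists e; [exists z|apply/Ht; exists z].
Qed.

Lemma approx_use C F X G m k phi V :
  sigma1_param C m k phi -> msatisfies G F X -> phi G V -> exists e, phi (approx F X e) V.
Proof.
move=> [t Ht] [HFG HGX] /Ht [y /eval_use [b Hb]].
exists (nat_of_bits (mkseq G b)); apply/Ht; exists y; apply: Hb => x Hx.
rewrite /join; case: (odd x) => //.
have Hxb : x./2 < b by apply: leq_ltn_trans Hx; rewrite leq_half_double -addnn; lia.
rewrite /approx bitn_bits nth_mkseq //.
case EG: (G x./2); rewrite ?andbT ?andbF ?orbF.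
  by case EF: (F x./2) => //=; rewrite HGX // EF.
by apply/negbTE/negP => /HFG; rewrite EG.
Qed.

Lemma approx_condition C F X e : computable_from C X -> mathias F X ->
  exists Y, [/\ mathias (approx F X e) Y, mextends (approx F X e) Y F X & computable_from C Y].
Proof.
move=> [tX HX] [[bF HbF] Xinf _]; pose B := bF + e.
have HEB x : approx F X e x -> x < B.
  by case/orP=> [/HbF|/andP[_ /bitn_lt]]; rewrite /B; lia.
exists (fun x => X x && (B < x)); split.
- split; first by exists B.
    move=> k; have [x [Hx HXx]] := Xinf (maxn k B.+1).
    by exists x; rewrite HXx; split; apply: leq_trans Hx; [exact: leq_maxl|exact: leq_maxr].
  by move=> x w /HEB Hx /andP[_]; apply: ltn_trans.
- split=> [x Fx|x /andP[]//|x]; first by rewrite /approx Fx.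
  by rewrite /approx => /orP[->//|/andP[]].
- exists (cguard (RComp tX [:: RProj 0]) (cguard (csub (RProj 0) (cconst B)) (cconst 1))) => x.
  have := eval_cguard (evComp (evals1 (evProj C 0 [:: x])) (HX x))
    (eval_cguard (eval_csub (evProj C 0 [:: x]) (eval_cconst C B _)) (eval_cconst C 1 _)).
  by rewrite /= subn_eq0 leqNgt; case: (X x); case: (B < x).
Qed.

Unset Implicit Arguments.
Theorem mainTheorem10 (n : nat) (A0 A1 : seq bool -> Prop) (C : nat -> bool)
  (F X : nat -> bool) (m : nat) (phi : (nat -> bool) -> valuation -> Prop) (M : matrix) :
  1 <= n ->
  fair n C A0 A1 ->
  mathias F X ->
  computable_from C X ->
  1 <= m ->
  sigma1_param C m (2 ^ n * m) phi ->
  disjoint_matrix m (2 ^ n * m) M ->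
  exists E Y : nat -> bool,
    [/\ mathias E Y, mextends E Y F X, computable_from C Y &
      (forall G, msatisfies G E Y -> ~ essential m (2 ^ n * m) (phi G) M) \/
      (exists V, [/\ is_valuation m (2 ^ n * m) M V,
                     diagonalizes m (2 ^ n * m) V A0 A1 & phi E V])].
Proof.
move=> _ Hfair HFX HX _ Hphi Hdisj.
have Hpsi := approx_sigma1 HX (let: And3 Ffin _ _ := HFX in Ffin) Hphi.
case: (classic (essential m (2 ^ n * m) (fun V => exists e, phi (approx F X e) V) M)).
  move=> /(Hfair _ _ _ Hpsi Hdisj) [V [HV Hdiag [e HphiE]]].
  have [Y [HEY Hext HY]] := approx_condition e HX HFX.
  by exists (approx F X e), Y; split => //; right; exists V.
move=> Hness; exists F, X; split => //; first by split => // x ->.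
left=> G HG HessG; apply: Hness => s.
have [V [HV HVs HphiG]] := HessG s.
by exists V; split => //; apply: approx_use Hphi HG HphiG.
Qed.
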